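(* Let $\mathcal X$ be an instance space and let $\mathcal H$ be a class of classifiers $\mathcal X\to\{0,1\}$ of finite VC dimension. Consider two disjoint demographic groups $A$ and $B$ (group membership is observed), a group-$B$ proportion $r\in(0,1)$, distributions $\mathcal D_A,\mathcal D_B$ on $\mathcal X$, and classifiers $h_A^*,h_B^*\in\mathcal H$ such that $$p:=\Pr_{x\sim\mathcal D_A}[h_A^*(x)=1]=\Pr_{x\sim\mathcal D_B}[h_B^*(x)=1],\qquad p\in(0,1].$$ Let $\eta\in[0,1/2)$, $\beta_{POS},\beta_{NEG}\in(0,1]$, $\nu\in[0,1)$, and let the true and biased distributions be as described in the context. Assume $$(1-r)(1-2\eta)+r\big((1-\eta)\beta_{POS}(1-2\nu)-\eta\beta_{NEG}\big)>0$$ and $$(1-r)(1-2\eta)+r\big((1-\eta)\beta_{NEG}-(1-2\nu)\beta_{POS}\,\eta\big)>0.$$ Then $h^*=(h_A^*,h_B^* )$ satisfies Equal Opportunity on the biased distribution and has the lowest biased error among all pairs of classifiers $(h_A,h_B)$ satisfying Equal Opportunity on the biased distribution; thus $h^*$ is recovered by Equal-Opportunity-constrained ERM on the biased distribution.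
   Context: True distribution: an example is generated by first drawing the group, $B$ with probability $r$ and $A$ with probability $1-r$; then $x\sim\mathcal D_B$ (resp. $\mathcal D_A$); then, writing $h^*(x)=h_g^*(x)$ for the group $g$ of $x$, the true label is $y=1-h^*(x)$ with probability $\eta$ and $y=h^*(x)$ otherwise, independently. Biased distribution: starting from a true example $(x,y)$, if $x\in B$ and $y=1$ the example is kept with probability $\beta_{POS}$ (discarded otherwise), if $x\in B$ and $y=0$ it is kept with probability $\beta_{NEG}$, and examples of group $A$ are always kept; then each kept example with $x\in B$ and $y=1$ has its label flipped to $0$ independently with probability $\nu$. The biased distribution is the distribution of the kept examples with their (possibly flipped) observed labels. A classifier is a pair $h=(h_A,h_B)$ of functions $\mathcal X\to\{0,1\}$, predicting $h_g(x)$ on an example of group $g$. Its biased error is the probability, under the biased distribution, that its prediction differs from the observed label. $h$ satisfies Equal Opportunity on a distribution if $\Pr[h_A(x)=1\mid y=1,x\in A]=\Pr[h_B(x)=1\mid y=1,x\in B]$ under that distribution (with $y$ the label in that distribution). *)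

From HB Require Import structures.
From mathcomp Require Import all_boot all_order all_algebra.
From mathcomp Require Import all_classical all_reals all_analysis.
Set Implicit Arguments. Unset Strict Implicit. Unset Printing Implicit Defensive.
Import Order.TTheory GRing.Theory Num.Theory.
Local Open Scope ring_scope.
Local Open Scope classical_set_scope.

Section VC.
Context {X : eqType}.
Definition shatters (H : set (X -> bool)) (S : seq X) : Prop :=
  forall f : X -> bool, exists2 h, H h & forall x, x \in S -> h x = f x.
Definition finite_VC (H : set (X -> bool)) : Prop :=
  exists d : nat, forall S : seq X, uniq S -> shatters H S -> (size S <= d)%N.
End VC.

Inductive group := GA | GB.

Section Model.
Context {R : realType} {d : measure_display} {X : measurableType d}.

Record model := Model {
  m_r : R;
  m_eta : R;
  m_bPOS : R;           (* keep prob. of positive group-B examples *)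
  m_bNEG : R;           (* keep prob. of negative group-B examples *)
  m_nu : R;             (* flip prob. of kept positive group-B examples *)
  m_DA : probability X R;
  m_DB : probability X R;
  m_hA : X -> bool;
  m_hB : X -> bool
}.

Variable M : model.

Definition grp_prob (g : group) : R :=
  match g with GA => 1 - m_r M | GB => m_r M end.
Definition grp_dist (g : group) : probability X R :=
  match g with GA => m_DA M | GB => m_DB M end.
Definition hstar (g : group) : X -> bool :=
  match g with GA => m_hA M | GB => m_hB M end.

Definition true_label_prob (g : group) (x : X) (yt : bool) : R :=
  if yt == hstar g x then 1 - m_eta M else m_eta M.

(** Probability that a true example of group g with true label yt is kept
    and ends up with observed label yo. *)
Definition keep_obs (g : group) (yt yo : bool) : R :=
  match g with
  | GA => (yt == yo)%:R
  | GB => match yt, yo with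
          | true, true => m_bPOS M * (1 - m_nu M)
          | true, false => m_bPOS M * m_nu M
          | false, false => m_bNEG M
          | false, true => 0
          end
  end.

(** Probability, under the TRUE process, that the example has group g,
    satisfies Q (a predicate on x), is kept, and has observed label yo. *)
Definition kept_mass (g : group) (Q : X -> bool) (yo : bool) : R :=
  grp_prob g * Rintegral (grp_dist g) setT
    (fun x => (Q x)%:R *
       (true_label_prob g x true * keep_obs g true yo
        + true_label_prob g x false * keep_obs g false yo)).

Definition kept_total : R :=
  kept_mass GA predT true + kept_mass GA predT false
  + kept_mass GB predT true + kept_mass GB predT false.

(** Biased distribution = true process conditioned on being kept:
    Pr_biased[group = g, Q x, observed label = yo]. *)
Definition biased_prob (g : group) (Q : X -> bool) (yo : bool) : R :=
  kept_mass g Q yo / kept_total.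

(** A classifier is a pair (h_A, h_B), represented as a function of the group. *)
Definition classifier := group -> X -> bool.

Definition biased_error (h : classifier) : R :=
  biased_prob GA (fun x => h GA x != true) true
  + biased_prob GA (fun x => h GA x != false) false
  + biased_prob GB (fun x => h GB x != true) true
  + biased_prob GB (fun x => h GB x != false) false.

Definition biased_TPR (h : classifier) (g : group) : R :=
  biased_prob g (h g) true / biased_prob g predT true.

Definition biased_EO (h : classifier) : Prop :=
  biased_TPR h GA = biased_TPR h GB.

End Model.

Definition measurable_classifier {d : measure_display} {X : measurableType d}
  (h : X -> bool) : Prop := measurable [set x | h x].

From HB Require Import structures.
From mathcomp Require Import all_boot all_order all_algebra.
From mathcomp Require Import all_classical all_reals all_analysis.
From mathcomp Require Import ring lra.
Set Implicit Arguments. Unset Strict Implicit. Unset Printing Implicit Defensive.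
Import Order.TTheory GRing.Theory Num.Theory.
Local Open Scope ring_scope.
Local Open Scope classical_set_scope.

(* In group A, the masses a1 = Pr[h = 1, h* = 1] and a0 = Pr[h = 1, h* = 0] of a classifier
   h determine both its biased error and its true-positive rate (b1, b0 in group B).  The
   bias acts on the positives of group B independently of x, so the biased true-positive
   rate of a group equals the true one, ((1 - eta) a1 + eta a0) / Pr[y = 1]; since both
   groups have the same p = Pr[h* = 1], Equal Opportunity becomes the linear constraint
   (1 - eta) a1 + eta a0 = (1 - eta) b1 + eta b0.  The biased error is affine in
   (a1, a0, b1, b0), with weights on the true positives and on the false positives whose
   sums over the two groups are the two expressions assumed positive.  A linear-programming
   argument then shows that h*, i.e. the point (p, 0, p, 0), minimises it under the
   constraint. *)

Section MeasurableClassifier.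
Context {d : measure_display} {X : measurableType d}.
Implicit Types Q h : X -> bool.

Lemma measurable_classifierT : measurable_classifier (@predT X).
Proof.
rewrite /measurable_classifier (_ : [set x | predT x] = setT) //.
by apply/seteqP; split.
Qed.

Lemma measurable_classifierN Q :
  measurable_classifier Q -> measurable_classifier (fun x => ~~ Q x).
Proof.
rewrite /measurable_classifier => mQ.
rewrite (_ : [set x | ~~ Q x] = ~` [set x | Q x]); first exact: measurableC.
by apply/seteqP; split => x /= /negP.
Qed.

Lemma measurable_classifierI Q h : measurable_classifier Q ->
  measurable_classifier h -> measurable_classifier (fun x => Q x && h x).
Proof.
rewrite /measurable_classifier => mQ mh.
rewrite (_ : [set x | Q x && h x] = [set x | Q x] `&` [set x | h x]).
  exact: measurableI.
by apply/seteqP; split => x /= /andP.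
Qed.

End MeasurableClassifier.

Section PredicateProbability.
Context {R : realType} {d : measure_display} {X : measurableType d}.
Variable P : probability X R.
Implicit Types Q h : X -> bool.

Definition pr Q : R := Rintegral P setT (fun x => (Q x)%:R).

Lemma pred_indicE Q : (fun x => (Q x)%:R) = \1_[set x | Q x] :> (X -> R).
Proof.
apply/funext => x; rewrite indicE.
by case: (boolP (Q x)) => Qx; [rewrite mem_set | rewrite memNset //; apply/negP].
Qed.

Lemma prE Q : measurable_classifier Q -> pr Q = fine (P [set x | Q x]).
Proof. by move=> mQ; rewrite /pr pred_indicE /Rintegral integral_indic // setIT. Qed.

Lemma pr_ge0 Q : 0 <= pr Q.
Proof. by apply: Rintegral_ge0 => x _; rewrite ler0n. Qed.

Lemma prT : pr predT = 1.
Proof.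
rewrite /pr Rintegral_cst // mul1r -[RHS]/(fine 1%E).
by congr fine; exact: probability_setT.
Qed.

Lemma integrable_pred Q : measurable_classifier Q ->
  P.-integrable setT (EFin \o (fun x => (Q x)%:R)).
Proof. by move=> mQ; rewrite pred_indicE; exact: integrable_indic. Qed.

Lemma Rintegral_pred_if Q h (u v : R) :
  measurable_classifier Q -> measurable_classifier h ->
  Rintegral P setT (fun x => (Q x)%:R * (if h x then u else v))
  = u * pr (fun x => Q x && h x) + v * pr (fun x => Q x && ~~ h x).
Proof.
move=> mQ mh.
have iQh := integrable_pred (measurable_classifierI mQ mh).
have iQnh := integrable_pred (measurable_classifierI mQ (measurable_classifierN mh)).
rewrite /pr -!RintegralZl // -RintegralD //; last 2 first.
- exact: (integrableZl _ u iQh).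
- exact: (integrableZl _ v iQnh).
by apply: eq_Rintegral => x _; case: (Q x); case: (h x) => /=; ring.
Qed.

Lemma pr0 : pr xpred0 = 0.
Proof. by rewrite /pr Rintegral_cst // mul0r. Qed.

Lemma pr_split Q h : measurable_classifier Q -> measurable_classifier h ->
  pr Q = pr (fun x => Q x && h x) + pr (fun x => Q x && ~~ h x).
Proof.
move=> mQ mh; have := Rintegral_pred_if 1 1 mQ mh; rewrite !mul1r => <-.
by apply: eq_Rintegral => x _; rewrite if_same mulr1.
Qed.

Lemma prN Q : measurable_classifier Q -> pr (fun x => ~~ Q x) = 1 - pr Q.
Proof. by move=> mQ; rewrite -prT (pr_split measurable_classifierT mQ) /= addrAC subrr add0r. Qed.

Lemma prNI Q h : measurable_classifier Q -> measurable_classifier h ->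
  pr (fun x => ~~ Q x && h x) = pr h - pr (fun x => Q x && h x).
Proof.
move=> mQ mh; rewrite (pr_split mh mQ).
have -> : (fun x => h x && Q x) = (fun x => Q x && h x).
  by apply/funext => x; rewrite andbC.
have -> : (fun x => h x && ~~ Q x) = (fun x => ~~ Q x && h x).
  by apply/funext => x; rewrite andbC.
by rewrite addrAC subrr add0r.
Qed.

Lemma pr_le1 Q : measurable_classifier Q -> pr Q <= 1.
Proof. by move=> mQ; rewrite -subr_ge0 -prN //; exact: pr_ge0. Qed.

Lemma prI_le Q h : measurable_classifier Q -> measurable_classifier h ->
  pr (fun x => Q x && h x) <= pr h.
Proof. by move=> mQ mh; rewrite -subr_ge0 -prNI //; exact: pr_ge0. Qed.

End PredicateProbability.

(* a1, a0 (resp. b1, b0) are Pr[h = 1, h* = 1] and Pr[h = 1, h* = 0] in group A (resp. B),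
   p = Pr[h* = 1] in both groups, and the last hypothesis is Equal Opportunity. *)
Lemma eo_linear_excess_ge0 (R : realFieldType) (e al1 al0 be1 be0 p a1 a0 b1 b0 : R) :
  0 <= e < 1 -> 0 <= al1 + be1 -> 0 <= al0 + be0 ->
  0 <= e * al1 + (1 - e) * al0 -> 0 <= e * be1 + (1 - e) * be0 ->
  a1 <= p -> 0 <= a0 -> b1 <= p -> 0 <= b0 ->
  (1 - e) * a1 + e * a0 = (1 - e) * b1 + e * b0 ->
  0 <= al1 * (p - a1) + al0 * a0 + be1 * (p - b1) + be0 * b0.
Proof.
move=> /andP[e0 e1] k1 k0 cA cB a1p a00 b1p b00 eo.
have e1' : 0 < 1 - e by lra.
pose s := (1 - e) * a1 + e * a0 - (1 - e) * p.
have sa : s <= e * a0 by have := ler_wpM2l (ltW e1') a1p; rewrite /s; lra.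
have sb : s <= e * b0 by have := ler_wpM2l (ltW e1') b1p; rewrite /s eo; lra.
pose m := Num.min a0 b0.
have [ma mb] : m <= a0 /\ m <= b0 by rewrite /m !ge_min !lexx orbT.
have m0 : 0 <= m by rewrite /m le_min a00 b00.
have sm : s <= e * m by rewrite /m minEle; case: ifP.
have excessE : (1 - e) * (al1 * (p - a1) + al0 * a0 + be1 * (p - b1) + be0 * b0)
  = (e * al1 + (1 - e) * al0) * a0 + (e * be1 + (1 - e) * be0) * b0 - (al1 + be1) * s.
  have -> : (al1 + be1) * s = al1 * s + be1 * ((1 - e) * b1 + e * b0 - (1 - e) * p).
    by rewrite /s eo; ring.
  by rewrite /s; ring.
(* The coefficients of a0 and b0 add up to e (al1 + be1) + (1 - e) (al0 + be0), so the bound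
   s <= e * m leaves at least (1 - e) (al0 + be0) m >= 0. *)
rewrite -(pmulr_rge0 _ e1') excessE.
have := ler_wpM2l k1 sm; have := ler_wpM2l cA ma; have := ler_wpM2l cB mb.
have := mulr_ge0 (ltW e1') (mulr_ge0 k0 m0).
lra.
Qed.

Lemma div_cancel_scale (F : fieldType) (c k a b : F) : c != 0 -> k != 0 ->
  c * a / k / (c * b / k) = a / b.
Proof.
move=> c0 k0; have [->|b0] := eqVneq b 0; first by rewrite !(mulr0, mul0r, invr0).
by field; rewrite c0 k0 b0.
Qed.

Section BiasedModel.
Context {R : realType} {d : measure_display} {X : measurableType d}.
Variable M : @model R d X.
Local Notation eta := (m_eta M).
Local Notation D g := (grp_dist M g).

Hypothesis hstar_measurable : forall g, measurable_classifier (hstar M g).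

(* [label_rate s yt] is Pr[y = yt | h*(x) = s]; [obs_rate g s yo] is the probability that an
   example of group g with h*(x) = s is kept with observed label yo. *)
Definition label_rate (s yt : bool) : R := if yt == s then 1 - eta else eta.

Definition obs_rate g (s yo : bool) : R :=
  label_rate s true * keep_obs M g true yo + label_rate s false * keep_obs M g false yo.

Definition pos_mass g : R := pr (D g) (hstar M g).
Definition tp_mass g (hg : X -> bool) : R := pr (D g) (fun x => hg x && hstar M g x).
Definition fp_mass g (hg : X -> bool) : R := pr (D g) (fun x => hg x && ~~ hstar M g x).

Lemma kept_massE g Q yo : measurable_classifier Q ->
  kept_mass M g Q yo = grp_prob M g *
    (obs_rate g true yo * pr (D g) (fun x => Q x && hstar M g x)
     + obs_rate g false yo * pr (D g) (fun x => Q x && ~~ hstar M g x)).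
Proof.
move=> mQ; rewrite /kept_mass -Rintegral_pred_if //; congr (_ * _).
by apply: eq_Rintegral => x _; rewrite /true_label_prob; case: (hstar M g x).
Qed.

Lemma kept_mass_predT g yo : kept_mass M g predT yo =
  grp_prob M g * (obs_rate g true yo * pos_mass g + obs_rate g false yo * (1 - pos_mass g)).
Proof.
by rewrite kept_massE /= ?(prN _ (hstar_measurable g)) //; exact: measurable_classifierT.
Qed.

Definition group_error_mass g (hg : X -> bool) : R :=
  kept_mass M g (fun x => hg x != true) true + kept_mass M g (fun x => hg x != false) false.

Lemma biased_error_mass (h : classifier) : kept_total M != 0 ->
  biased_error M h * kept_total M = group_error_mass GA (h GA) + group_error_mass GB (h GB).
Proof. by move=> kt0; rewrite /biased_error /biased_prob -!mulrDl divfK // addrA. Qed.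

Definition tp_weight g : R := grp_prob M g * (obs_rate g true true - obs_rate g true false).
Definition fp_weight g : R := grp_prob M g * (obs_rate g false false - obs_rate g false true).

Lemma group_error_massE g hg : measurable_classifier hg ->
  group_error_mass g hg =
  kept_mass M g predT true - tp_weight g * tp_mass g hg + fp_weight g * fp_mass g hg.
Proof.
move=> mh; have mhN := measurable_classifierN mh.
have mhs := hstar_measurable g; have mhsN := measurable_classifierN mhs.
rewrite /group_error_mass.
have -> : (fun x => hg x != true) = (fun x => ~~ hg x) by apply/funext => x; case: (hg x).
have -> : (fun x => hg x != false) = hg by apply/funext => x; case: (hg x).
rewrite kept_mass_predT !kept_massE // !prNI // (prN _ mhs).
by rewrite /tp_weight /fp_weight /tp_mass /fp_mass /pos_mass; ring.
Qed.

Lemma tp_mass_hstar g : tp_mass g (hstar M g) = pos_mass g.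
Proof.
by rewrite /tp_mass (_ : (fun x => _) = hstar M g) //; apply/funext => x; rewrite andbb.
Qed.

Lemma fp_mass_hstar g : fp_mass g (hstar M g) = 0.
Proof.
by rewrite /fp_mass (_ : (fun x => _) = xpred0) ?pr0 //; apply/funext => x; rewrite andbN.
Qed.

Definition pos_label_mass g (hg : X -> bool) : R := (1 - eta) * tp_mass g hg + eta * fp_mass g hg.
Definition pos_label_prob g : R := (1 - eta) * pos_mass g + eta * (1 - pos_mass g).

Lemma obs_rate_pos g s : obs_rate g s true = label_rate s true * keep_obs M g true true.
Proof. by case: g; rewrite /obs_rate /=; ring. Qed.

(* Under-sampling and flipping remove group-B positives independently of x, so they scale the
   numerator and the denominator of the true-positive rate alike. *)
Lemma biased_TPRE (h : classifier) g : kept_total M != 0 -> grp_prob M g != 0 ->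
  keep_obs M g true true != 0 -> measurable_classifier (h g) ->
  biased_TPR M h g = pos_label_mass g (h g) / pos_label_prob g.
Proof.
move=> kt0 gp0 k0 mh.
rewrite /biased_TPR /biased_prob kept_massE // kept_mass_predT !obs_rate_pos.
rewrite /pos_label_mass /pos_label_prob /label_rate /= -/(tp_mass g (h g)) -/(fp_mass g (h g)).
have factor (c a b : R) : (1 - eta) * c * a + eta * c * b = c * ((1 - eta) * a + eta * b).
  by ring.
by rewrite !factor !mulrA div_cancel_scale // mulf_neq0.
Qed.

Lemma tp_fp_weight_mix g : eta * tp_weight g + (1 - eta) * fp_weight g =
  grp_prob M g * (1 - 2 * eta) * (keep_obs M g false false - keep_obs M g false true).
Proof. by rewrite /tp_weight /fp_weight /obs_rate /label_rate /=; ring. Qed.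

Lemma tp_weight_sumE : tp_weight GA + tp_weight GB = (1 - m_r M) * (1 - 2 * eta)
  + m_r M * ((1 - eta) * m_bPOS M * (1 - 2 * m_nu M) - eta * m_bNEG M).
Proof. by rewrite /tp_weight /obs_rate /label_rate /=; ring. Qed.

Lemma fp_weight_sumE : fp_weight GA + fp_weight GB = (1 - m_r M) * (1 - 2 * eta)
  + m_r M * ((1 - eta) * m_bNEG M - (1 - 2 * m_nu M) * m_bPOS M * eta).
Proof. by rewrite /fp_weight /obs_rate /label_rate /=; ring. Qed.

Hypotheses (r_gt0 : 0 < m_r M) (r_lt1 : m_r M < 1).
Hypotheses (eta_ge0 : 0 <= eta) (eta_le_half : eta <= 1 / 2).
Hypotheses (bPOS_gt0 : 0 < m_bPOS M) (bNEG_ge0 : 0 <= m_bNEG M).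
Hypotheses (nu_ge0 : 0 <= m_nu M) (nu_lt1 : m_nu M < 1).

Lemma grp_prob_gt0 g : 0 < grp_prob M g.
Proof. by case: g => //=; rewrite subr_gt0. Qed.

Lemma label_rate_ge0 s yt : 0 <= label_rate s yt.
Proof.
have := eta_ge0; have := eta_le_half.
by rewrite /label_rate; case: ifP => _; lra.
Qed.

Lemma keep_obs_ge0 g yt yo : 0 <= keep_obs M g yt yo.
Proof.
have := nu_ge0; have := nu_lt1; have := bPOS_gt0; have := bNEG_ge0.
by case: g; case: yt; case: yo => //= *; [apply: mulr_ge0|apply: mulr_ge0]; lra.
Qed.

Lemma keep_obs_pos_gt0 g : 0 < keep_obs M g true true.
Proof. by case: g => //=; apply: mulr_gt0; rewrite ?subr_gt0. Qed.

Lemma tp_fp_weight_mix_ge0 g : 0 <= eta * tp_weight g + (1 - eta) * fp_weight g.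
Proof.
have := eta_le_half; have := keep_obs_ge0 g false false.
rewrite tp_fp_weight_mix => ko0 eta2; apply: mulr_ge0.
  by apply: mulr_ge0; [exact: ltW (grp_prob_gt0 g)|lra].
by case: g ko0 => /=; rewrite subr0.
Qed.

Lemma kept_mass_ge0 g Q yo : 0 <= kept_mass M g Q yo.
Proof.
apply: mulr_ge0; first exact: ltW (grp_prob_gt0 g).
apply: Rintegral_ge0 => x _; apply: mulr_ge0; first exact: ler0n.
by apply: addr_ge0; apply: mulr_ge0; rewrite ?label_rate_ge0 ?keep_obs_ge0.
Qed.

Lemma kept_mass_GA_total : kept_mass M GA predT true + kept_mass M GA predT false = 1 - m_r M.
Proof. by rewrite !kept_mass_predT /obs_rate /label_rate /=; ring. Qed.

Lemma kept_total_gt0 : 0 < kept_total M.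
Proof.
rewrite /kept_total kept_mass_GA_total.
have := r_lt1; have := kept_mass_ge0 GB predT true; have := kept_mass_ge0 GB predT false.
lra.
Qed.

Lemma pos_label_prob_gt0 g : 0 < pos_mass g -> 0 < pos_label_prob g.
Proof.
move=> pos_gt0; have := pr_le1 (D g) (hstar_measurable g); rewrite -/(pos_mass g) => pos_le1.
have := eta_ge0; have := eta_le_half => eta_le eta_ge.
have : 0 < (1 - eta) * pos_mass g by apply: mulr_gt0; lra.
have : 0 <= eta * (1 - pos_mass g) by apply: mulr_ge0; lra.
by rewrite /pos_label_prob; lra.
Qed.

Lemma biased_EOE (h : classifier) : pos_mass GA = pos_mass GB -> 0 < pos_mass GA ->
  measurable_classifier (h GA) -> measurable_classifier (h GB) ->
  biased_EO M h <-> pos_label_mass GA (h GA) = pos_label_mass GB (h GB).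
Proof.
move=> posE pos_gt0 mA mB.
have kt0 : kept_total M != 0 by rewrite gt_eqF // kept_total_gt0.
have probE : pos_label_prob GB = pos_label_prob GA by rewrite /pos_label_prob posE.
have prob_neq0 : pos_label_prob GA != 0 by rewrite gt_eqF // pos_label_prob_gt0.
rewrite /biased_EO !biased_TPRE // ?gt_eqF ?grp_prob_gt0 ?keep_obs_pos_gt0 // probE.
by split=> [/(congr1 ( *%R^~ (pos_label_prob GA)))|->]; rewrite ?divfK.
Qed.

Theorem hstar_EO_optimal :
  pos_mass GA = pos_mass GB -> 0 < pos_mass GA ->
  0 <= tp_weight GA + tp_weight GB -> 0 <= fp_weight GA + fp_weight GB ->
  biased_EO M (hstar M) /\
  (forall h : classifier, measurable_classifier (h GA) -> measurable_classifier (h GB) ->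
     biased_EO M h -> biased_error M (hstar M) <= biased_error M h).
Proof.
move=> posE pos_gt0 tpw fpw; split.
  apply/biased_EOE; rewrite ?hstar_measurable //.
  by rewrite /pos_label_mass !tp_mass_hstar !fp_mass_hstar posE.
move=> h mA mB /(biased_EOE posE pos_gt0 mA mB) eo.
have eta01 : 0 <= eta < 1 by have := eta_ge0; have := eta_le_half; lra.
have tpA : tp_mass GA (h GA) <= pos_mass GA by exact: prI_le.
have tpB : tp_mass GB (h GB) <= pos_mass GA by rewrite posE; exact: prI_le.
have fpA : 0 <= fp_mass GA (h GA) by exact: pr_ge0.
have fpB : 0 <= fp_mass GB (h GB) by exact: pr_ge0.
have excess_ge0 := eo_linear_excess_ge0 eta01 tpw fpw (tp_fp_weight_mix_ge0 GA)
  (tp_fp_weight_mix_ge0 GB) tpA fpA tpB fpB eo.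
have kt0 : kept_total M != 0 by rewrite gt_eqF // kept_total_gt0.
rewrite -(ler_pM2r kept_total_gt0) !biased_error_mass // !group_error_massE ?hstar_measurable //.
by rewrite !tp_mass_hstar !fp_mass_hstar -posE; lra.
Qed.

End BiasedModel.

Theorem mainTheorem1 (R : realType) (d : measure_display) (X : measurableType d)
  (H : set (X -> bool)) (r eta bPOS bNEG nu : R)
  (DA DB : probability X R) (hA hB : X -> bool) :
  finite_VC H ->
  (forall h, H h -> measurable_classifier h) ->
  H hA -> H hB ->
  0 < r < 1 ->
  (DA [set x | hA x] = DB [set x | hB x])%E ->
  (0%E < DA [set x | hA x])%E ->
  0 <= eta < 1 / 2 ->
  0 < bPOS <= 1 -> 0 < bNEG <= 1 ->
  0 <= nu < 1 ->
  0 < (1 - r) * (1 - 2 * eta)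
      + r * ((1 - eta) * bPOS * (1 - 2 * nu) - eta * bNEG) ->
  0 < (1 - r) * (1 - 2 * eta)
      + r * ((1 - eta) * bNEG - (1 - 2 * nu) * bPOS * eta) ->
  let M := Model r eta bPOS bNEG nu DA DB hA hB in
  let hstar : classifier := fun g => match g with GA => hA | GB => hB end in
  biased_EO M hstar /\
  (forall hA' hB' : X -> bool,
     measurable_classifier hA' -> measurable_classifier hB' ->
     let h : classifier := fun g => match g with GA => hA' | GB => hB' end in
     biased_EO M h -> biased_error M hstar <= biased_error M h).
Proof.
(* Finite VC dimension only matters for reading the result as a statement about ERM. *)
move=> _ Hmeas HA HB /andP[r_gt0 r_lt1] posE pos_gt0 /andP[eta_ge0 eta_lt_half].
move=> /andP[bPOS_gt0 _] /andP[bNEG_gt0 _] /andP[nu_ge0 nu_lt1] tp_gt0 fp_gt0 M hs.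
have hs_meas g : measurable_classifier (hstar M g) by case: g; exact: Hmeas.
have pos_massE g : pos_mass M g = fine (grp_dist M g [set x | hstar M g x]).
  exact: prE.
have pos_eq : pos_mass M GA = pos_mass M GB by rewrite !pos_massE /= posE.
have pos_mass_gt0 : 0 < pos_mass M GA.
  rewrite pos_massE; apply: fine_gt0; rewrite pos_gt0 /=.
  exact: le_lt_trans (probability_le1 _ (hs_meas GA)) (ltry 1).
have tp_ge0 : 0 <= tp_weight M GA + tp_weight M GB by rewrite tp_weight_sumE ltW.
have fp_ge0 : 0 <= fp_weight M GA + fp_weight M GB by rewrite fp_weight_sumE ltW.
have [EO opt] := hstar_EO_optimal hs_meas r_gt0 r_lt1 eta_ge0 (ltW eta_lt_half)
  bPOS_gt0 (ltW bNEG_gt0) nu_ge0 nu_lt1 pos_eq pos_mass_gt0 tp_ge0 fp_ge0.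
by split=> // hA' hB' mA' mB' h; exact: opt.
Qed.
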